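(* Consider the planning problem $\mathcal{P}(\xi)$ defined in the context (with fixed data $A,B,C,M,N,K$, mode sets $\mathbb{X}_i,\mathbb{U}_i,\mathbb{W}_i,\mathbb{Z}_i,\mathbb{I}_i,\mathbb{X}^f_i$, obstacles $\mathbb{O}$). Suppose Assumptions (A1)–(A4) hold. Let $k_p\ge 0$ be a planning index and suppose $\mathcal{P}(x(k_pM))$ is feasible, with optimal solution $x_p^\star(k_p+j|k_p)$ ($j=0,\dots,N$), $u_p^\star(k_p+j|k_p)$ ($j=0,\dots,N-1$), $i^\star$. Assume the lower-layer controller, operated in mode $i^\star$ and tracking the reference generated from this solution, guarantees the contract $$x\big((k_p+1)M\big)-x_p^\star(k_p+1|k_p)\in\mathbb{Z}_{i^\star}.$$ Then the planning problem $\mathcal{P}\big(x((k_p+1)M)\big)$ is feasible.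
   Context: System: $x(k+1)=Ax(k)+Bu(k)+w(k)$, $y(k)=Cx(k)$, with $x(k)\in\mathbb{R}^n$, $u(k)\in\mathbb{R}^m$, $y(k)\in\mathbb{R}^p$, unknown disturbance $w(k)\in\mathbb{R}^n$, and closed convex constraint sets $\mathbb{X}\subseteq\mathbb{R}^n$, $\mathbb{U}\subseteq\mathbb{R}^m$. Obstacles: for $\ell=1,\dots,H$, $\mathbb{O}_\ell=\{y\in\mathbb{R}^p: E_\ell y<f_\ell\}$ (componentwise), $E_\ell\in\mathbb{R}^{q_\ell\times p}$, $f_\ell\in\mathbb{R}^{q_\ell}$, each the interior of a compact convex polytope; $\mathbb{O}=\bigcup_{\ell=1}^H\mathbb{O}_\ell$, so $y\notin\mathbb{O}$ iff for every $\ell$ there is a row index $a$ with $E_{\ell,a}y\ge f_{\ell,a}$. Notation: $\mathbb{X}\oplus\mathbb{Y}=\{x+y:x\in\mathbb{X},y\in\mathbb{Y}\}$, $\mathbb{X}\ominus\mathbb{Y}=\{x: \{x\}\oplus\mathbb{Y}\subseteq\mathbb{X}\}$, and for a matrix $G$, $G\mathbb{S}=\{Gs:s\in\mathbb{S}\}$. Modes: there are $N_w$ operating modes; for each $i\in\{1,\dots,N_w\}$, $\mathbb{X}_i\subseteq\mathbb{X}$ and $\mathbb{U}_i\subseteq\mathbb{U}$ are closed convex polytopes, $\mathbb{W}_i$ is a compact convex polytope, and $\mathbb{Z}_i\subseteq\mathbb{R}^n$ is a compact convex polytope (contract set); $K\in\mathbb{R}^{m\times n}$ is a fixed gain. (A1):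 if $x(k)\in\mathbb{X}_i$ and $u(k)\in\mathbb{U}_i$ then $w(k)\in\mathbb{W}_i$. Planning model: $M>1$ integer, $A_p=A^M$, $B_p=\sum_{i=0}^{M-1}A^iB$. (A2): $(A,B)$ and $(A_p,B_p)$ are controllable. (A3) Inter-sample sets $\mathbb{I}_i\subseteq\mathbb{R}^n\times\mathbb{R}^m$: if $(x_p,u_p)\in\mathbb{I}_i$ then for $\ell=1,\dots,M-1$: $A^\ell x_p+\sum_{m=0}^{\ell-1}A^mBu_p\in\mathbb{X}_i\ominus\mathbb{Z}_i$ and $C(A^\ell x_p+\sum_{m=0}^{\ell-1}A^mBu_p)\notin\mathbb{O}\oplus(-C)\mathbb{Z}_i$. (A4) Terminal sets $\mathbb{X}^f_i\subseteq\mathbb{R}^n$ and maps $\kappa^f_i:\mathbb{R}^n\to\mathbb{R}^m$: $x_p\in\mathbb{X}^f_i$ implies $A_px_p+B_p\kappa^f_i(x_p)\in\mathbb{X}^f_i$, $x_p\in\mathbb{X}_i\ominus\mathbb{Z}_i$, $\kappa^f_i(x_p)\in\mathbb{U}_i\ominus K\mathbb{Z}_i$, $(x_p,\kappa^f_i(x_p))\in\mathbb{I}_i$, and $Cx_p\notin\mathbb{O}\oplus(-C)\mathbb{Z}_i$. Planning problem $\mathcal{P}(\xi)$ at planning index $k_p$ (time $k_pM$), with $\xi=x(k_pM)$, horizon $N\ge1$, weights $\alpha_x,\alpha_u\ge0$, goal $x_{\text{goal}}$: minimize over $x_p(k_p+j|k_p)$ ($j=0,\dots,N$), $u_p(k_p+j|k_p)$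 ($j=0,\dots,N-1$) and $i$ the cost $\|x_{\text{goal}}-x_p(k_p+N|k_p)\|_\infty+\sum_{j=0}^{N-1}\big(\alpha_x\|x_p(k_p+j|k_p)\|_\infty+\alpha_u\|u_p(k_p+j|k_p)\|_\infty\big)$ subject to: $i\in\{1,\dots,N_w\}$; $\xi-x_p(k_p|k_p)\in\mathbb{Z}_i$; and for all $j\in\{0,\dots,N-1\}$: $x_p(k_p+j+1|k_p)=A_px_p(k_p+j|k_p)+B_pu_p(k_p+j|k_p)$, $x_p(k_p+j|k_p)\in\mathbb{X}_i\ominus\mathbb{Z}_i$, $u_p(k_p+j|k_p)\in\mathbb{U}_i\ominus K\mathbb{Z}_i$, $Cx_p(k_p+j|k_p)\notin\mathbb{O}\oplus(-C)\mathbb{Z}_i$, $(x_p(k_p+j|k_p),u_p(k_p+j|k_p))\in\mathbb{I}_i$; and $x_p(k_p+N|k_p)\in\mathbb{X}^f_i$. *)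

From mathcomp Require Import all_boot all_order all_algebra.
Set Implicit Arguments. Unset Strict Implicit. Unset Printing Implicit Defensive.
Import Order.TTheory GRing.Theory Num.Theory.
Local Open Scope ring_scope.

Section Defs.
Variable R : realFieldType.

Definition vset (k : nat) := 'cV[R]_k -> Prop.

Definition msum k (S T : vset k) : vset k :=
  fun y => exists s t, S s /\ T t /\ y = s + t.

Definition pdiff k (S T : vset k) : vset k :=
  fun x => forall t, T t -> S (x + t).

Definition mimage k l (G : 'M[R]_(l, k)) (S : vset k) : vset l :=
  fun y => exists s, S s /\ y = G *m s.

Definition ninf k (v : 'cV[R]_k) : R := \big[Num.max/0]_(i < k) `|v i 0|.

Definition obstacles p (H : nat) (q : 'I_H -> nat)
  (E : forall l : 'I_H, 'M[R]_(q l, p)) (f : forall l : 'I_H, 'cV[R]_(q l)) : vset p :=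
  fun y => exists l : 'I_H, forall a : 'I_(q l), (E l *m y) a 0 < f l a 0.

(* Controllability of (A,B): the Kalman matrix [B, AB, ..., A^(n-1)B] has rank n,
   expressed as the (row-)space spanned by the transposed blocks having rank n. *)
Definition controllable n m (A : 'M[R]_n) (B : 'M[R]_(n, m)) : Prop :=
  \rank (\sum_(k < n) <<(A ^+ k *m B)^T>>)%MS = n.

Definition Ap n (A : 'M[R]_n) (M : nat) : 'M[R]_n := A ^+ M.
Definition Bp n m (A : 'M[R]_n) (B : 'M[R]_(n, m)) (M : nat) : 'M[R]_(n, m) :=
  \sum_(i < M) A ^+ i *m B.

Definition intersample n m (A : 'M[R]_n) (B : 'M[R]_(n, m))
  (xp : 'cV[R]_n) (up : 'cV[R]_m) (l : nat) : 'cV[R]_n :=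
  A ^+ l *m xp + \sum_(j < l) A ^+ j *m B *m up.

(* Constraint set of P(xi) for a candidate (xs, us, i), with
   xs j = x_p(k_p + j | k_p), us j = u_p(k_p + j | k_p). *)
Definition plan_feasible n m p Nw (A : 'M[R]_n) (B : 'M[R]_(n, m)) (C : 'M[R]_(p, n))
  (M N : nat) (K : 'M[R]_(m, n))
  (Xi : 'I_Nw -> vset n) (Ui : 'I_Nw -> vset m) (Zi : 'I_Nw -> vset n)
  (Ii : 'I_Nw -> 'cV[R]_n -> 'cV[R]_m -> Prop) (Xf : 'I_Nw -> vset n)
  (O : vset p)
  (xi : 'cV[R]_n) (xs : nat -> 'cV[R]_n) (us : nat -> 'cV[R]_m) (i : 'I_Nw) : Prop :=
  Zi i (xi - xs 0%N) /\
  (forall j, (j < N)%N ->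
     [/\ xs j.+1 = Ap A M *m xs j + Bp A B M *m us j,
         pdiff (Xi i) (Zi i) (xs j),
         pdiff (Ui i) (mimage K (Zi i)) (us j),
         ~ msum O (mimage (- C) (Zi i)) (C *m xs j)
       & Ii i (xs j) (us j)]) /\
  Xf i (xs N).

Definition plan_cost n m (N : nat) (ax au : R) (xgoal : 'cV[R]_n)
  (xs : nat -> 'cV[R]_n) (us : nat -> 'cV[R]_m) : R :=
  ninf (xgoal - xs N) + \sum_(j < N) (ax * ninf (xs j) + au * ninf (us j)).

End Defs.

From mathcomp Require Import all_boot all_order all_algebra.
Import Order.TTheory GRing.Theory Num.Theory.
Local Open Scope ring_scope.

(* Recursive feasibility by the usual shift argument: drop the first step of
   the feasible plan and append one step of the terminal controller, staying in
   the same mode. Every constraint of the shifted plan is a constraint of the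
   old plan or one of the terminal conditions (A4), and the contract is exactly
   the initial-state constraint at the next planning instant. *)

Definition shift_seq {T : Type} (N : nat) (s : nat -> T) (t : T) : nat -> T :=
  fun j => if (j < N)%N then s j.+1 else t.

Section ShiftedPlan.

Variables (R : realFieldType) (n m p Nw : nat).
Variables (A : 'M[R]_n) (B : 'M[R]_(n, m)) (C : 'M[R]_(p, n)) (K : 'M[R]_(m, n)).
Variables (M N : nat).
Variables (Xi : 'I_Nw -> vset R n) (Ui : 'I_Nw -> vset R m) (Zi : 'I_Nw -> vset R n).
Variables (Ii : 'I_Nw -> 'cV[R]_n -> 'cV[R]_m -> Prop) (Xf : 'I_Nw -> vset R n).
Variable O : vset R p.

Lemma plan_feasible_shift (xi xi' : 'cV[R]_n) xs us (i : 'I_Nw) (v : 'cV[R]_m) :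
  (0 < N)%N ->
  plan_feasible A B C M N K Xi Ui Zi Ii Xf O xi xs us i ->
  Zi i (xi' - xs 1%N) ->
  Xf i (Ap A M *m xs N + Bp A B M *m v) ->
  pdiff (Xi i) (Zi i) (xs N) ->
  pdiff (Ui i) (mimage K (Zi i)) v ->
  Ii i (xs N) v ->
  ~ msum O (mimage (- C) (Zi i)) (C *m xs N) ->
  plan_feasible A B C M N K Xi Ui Zi Ii Xf O xi'
    (shift_seq N xs (Ap A M *m xs N + Bp A B M *m v)) (shift_seq N.-1 us v) i.
Proof.
move=> N_gt0 [_ [step _]] init termXf termX termU termI termO.
split; first by rewrite /shift_seq N_gt0.
split; last by rewrite /shift_seq ltnn.
move=> j lt_jN; rewrite /shift_seq lt_jN ltn_predRL.
case: (ltnP j.+1 N) => [lt_j1N | le_Nj1].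
  by have [-> ? ? ? ?] := step _ lt_j1N.
suff -> : j.+1 = N by [].
by apply/eqP; rewrite eqn_leq lt_jN.
Qed.

End ShiftedPlan.

Theorem proposition1
  (R : realFieldType) (n m p Nw : nat)
  (A : 'M[R]_n) (B : 'M[R]_(n, m)) (C : 'M[R]_(p, n)) (K : 'M[R]_(m, n))
  (M N : nat) (hM : (1 < M)%N) (hN : (1 <= N)%N)
  (ax au : R) (hax : 0 <= ax) (hau : 0 <= au) (xgoal : 'cV[R]_n)
  (* global constraint sets and mode sets *)
  (Xg : vset R n) (Ug : vset R m)
  (Xi : 'I_Nw -> vset R n) (Ui : 'I_Nw -> vset R m)
  (Wi : 'I_Nw -> vset R n) (Zi : 'I_Nw -> vset R n)
  (hXi : forall i x, Xi i x -> Xg x) (hUi : forall i u, Ui i u -> Ug u)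
  (* obstacles *)
  (H : nat) (q : 'I_H -> nat)
  (E : forall l : 'I_H, 'M[R]_(q l, p)) (f : forall l : 'I_H, 'cV[R]_(q l))
  (* inter-sample and terminal ingredients *)
  (Ii : 'I_Nw -> 'cV[R]_n -> 'cV[R]_m -> Prop)
  (Xf : 'I_Nw -> vset R n) (kf : 'I_Nw -> 'cV[R]_n -> 'cV[R]_m)
  (* closed-loop system trajectory *)
  (x : nat -> 'cV[R]_n) (u : nat -> 'cV[R]_m) (w : nat -> 'cV[R]_n)
  (hsys : forall k, x k.+1 = A *m x k + B *m u k + w k)
  (* (A1) *)
  (A1 : forall k i, Xi i (x k) -> Ui i (u k) -> Wi i (w k))
  (* (A2) *)
  (A2 : controllable A B /\ controllable (Ap A M) (Bp A B M))
  (* (A3) *)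
  (A3 : forall i xp up, Ii i xp up ->
        forall l, (1 <= l <= M.-1)%N ->
          pdiff (Xi i) (Zi i) (intersample A B xp up l) /\
          ~ msum (obstacles E f) (mimage (- C) (Zi i)) (C *m intersample A B xp up l))
  (* (A4) *)
  (A4 : forall i xp, Xf i xp ->
        [/\ Xf i (Ap A M *m xp + Bp A B M *m kf i xp),
            pdiff (Xi i) (Zi i) xp,
            pdiff (Ui i) (mimage K (Zi i)) (kf i xp),
            Ii i xp (kf i xp)
          & ~ msum (obstacles E f) (mimage (- C) (Zi i)) (C *m xp)])
  (* optimal solution of P(x(k_p M)) *)
  (kp : nat) (xs : nat -> 'cV[R]_n) (us : nat -> 'cV[R]_m) (istar : 'I_Nw)
  (hfeas : plan_feasible A B C M N K Xi Ui Zi Ii Xf (obstacles E f)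
             (x (kp * M)%N) xs us istar)
  (hopt : forall xs' us' i',
        plan_feasible A B C M N K Xi Ui Zi Ii Xf (obstacles E f) (x (kp * M)%N) xs' us' i' ->
        plan_cost N ax au xgoal xs us <= plan_cost N ax au xgoal xs' us')
  (* contract guaranteed by the lower layer *)
  (hcontract : Zi istar (x (kp.+1 * M)%N - xs 1%N)) :
  exists xs' us' i',
    plan_feasible A B C M N K Xi Ui Zi Ii Xf (obstacles E f) (x (kp.+1 * M)%N) xs' us' i'.
Proof.
have [_ [_ term]] := hfeas.
have [termXf termX termU termI termO] := A4 _ _ term.
exists (shift_seq N xs (Ap A M *m xs N + Bp A B M *m kf istar (xs N))).
exists (shift_seq N.-1 us (kf istar (xs N))), istar.
exact: plan_feasible_shift hN hfeas hcontract termXf termX termU termI termO.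
Qed.
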